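(* Let $\mathbf{X},\mathbf{Y}$ be Banach spaces, $\mathcal{S}\subset\mathbf{X}$, $\mathcal{S}'\subset\mathbf{Y}$, and let $\Phi:\mathcal{S}\to\mathcal{S}'$ be measurable and expansive, i.e., there is $\kappa>0$ with $\|\Phi(\mathbf{x})-\Phi(\mathbf{x}')\|_{\mathbf{Y}}\ge\kappa\|\mathbf{x}-\mathbf{x}'\|_{\mathbf{X}}$ for all $\mathbf{x},\mathbf{x}'\in\mathcal{S}$. If $s_0\ge0$ and $\mathbb{P}$ is a Borel probability measure on $\mathcal{S}$ of growth order $s_0$ (w.r.t. $\mathbf{X}$), then $\mathbb{P}\circ\Phi^{-1}$ is a Borel probability measure on $\mathcal{S}'$ of growth order $s_0$ (w.r.t. $\mathbf{Y}$).
   Context: Subsets of Banach spaces carry the trace of the Borel $\sigma$-algebra of the ambient space (this defines measurability of $\Phi$ and Borel measures on subsets). A Borel probability measure $\mathbb{P}$ on $\mathcal{S}\subset\mathbf{X}$ has (logarithmic) growth order $s_0\in[0,\infty)$ w.r.t. $\mathbf{X}$ if for every $s>s_0$ there are $\varepsilon_0,c>0$ with $\mathbb{P}(\mathcal{S}\cap\mathcal{B}(\mathbf{x},\varepsilon;\mathbf{X}))\le2^{-c\varepsilon^{-1/s}}$ for all $\mathbf{x}\in\mathbf{X}$ and $\varepsilon\in(0,\varepsilon_0)$, where $\mathcal{B}(\mathbf{x},\varepsilon;\mathbf{X})$ is the closed ball. *)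

From HB Require Import structures.
From mathcomp Require Import all_boot all_order all_algebra.
From mathcomp Require Import all_classical all_reals all_analysis.
Set Implicit Arguments. Unset Strict Implicit. Unset Printing Implicit Defensive.
Import Order.TTheory GRing.Theory Num.Theory.
Import numFieldNormedType.Exports.
Local Open Scope classical_set_scope.
Local Open Scope ring_scope.

Definition Borel (T : ptopologicalType) := g_sigma_algebraType (@open T).

(* The witness [x0 \in S] is only used to
   equip the subtype with the pointed structure required by MathComp-Analysis
   measurable types (a probability measure on S forces S to be nonempty). *)
Record sub_space (X : Type) (S : set X) (x0 : X) (hx0 : S x0) := SubSpace {
  sub_val : X ;
  sub_valP : S sub_val }.
Arguments sub_val {X S x0 hx0}.

Section sub_space_instances.
Context (X : Type) (S : set X) (x0 : X) (hx0 : S x0).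
HB.instance Definition _ := gen_eqMixin (sub_space hx0).
HB.instance Definition _ := gen_choiceMixin (sub_space hx0).
HB.instance Definition _ := isPointed.Build (sub_space hx0) (@SubSpace X S x0 hx0 x0 hx0).
End sub_space_instances.

(* [S] with the trace of the Borel sigma-algebra of the ambient space [X]:
   the measurable sets are exactly the [S `&` B] (seen in S) with B Borel. *)
Definition trace_space (X : ptopologicalType) (S : set X) (x0 : X)
  (hx0 : S x0) :=
  g_sigma_algebra_preimageType (@sub_val X S x0 hx0 : sub_space hx0 -> Borel X).

Definition has_growth_order (R : realType) (X : normedModType R) (S : set X)
  (x0 : X) (hx0 : S x0) (mu : set (trace_space hx0) -> \bar R) (s0 : R) :=
  forall s : R, s0 < s ->
    exists eps0 c : R, 0 < eps0 /\ 0 < c /\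
      forall (x : X) (eps : R), 0 < eps -> eps < eps0 ->
        (mu ((@sub_val X S x0 hx0) @^-1` [set y : X | (`|x - y| <= eps)%R])
          <= (2 `^ (- (c * eps `^ (- s^-1))))%R%:E)%E.

From HB Require Import structures.
From mathcomp Require Import all_boot all_order all_algebra.
From mathcomp Require Import all_classical all_reals all_analysis.
From mathcomp Require Import lra.
Import Order.TTheory GRing.Theory Num.Theory.
Import numFieldNormedType.Exports.
Local Open Scope classical_set_scope.
Local Open Scope ring_scope.

(* If the preimage under an expansive map [Phi] of the closed ball B(y, e)
   contains some x1, then any x in it satisfies
   kappa |x1 - x| <= |Phi x1 - Phi x| <= 2e, so the whole preimage lies in
   B(x1, 2e/kappa).  The growth bound at radius 2e/kappa, after pulling the
   factor (2/kappa)^(-1/s) into the constant, is the growth bound at radius e. *)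

Lemma measurable_trace_closed {X : ptopologicalType} {S : set X} {x0 : X}
    {hx0 : S x0} (B : set X) :
  closed B -> measurable (sub_val @^-1` B : set (trace_space hx0)).
Proof.
move=> cB; exists B; last by rewrite setTI.
rewrite -[B]setCK; apply: (@measurableC _ (Borel X)).
by apply: sub_sigma_algebra; exact: closed_openC.
Qed.

Lemma measurable_trace_closed_ball {R : realType} {X : normedModType R}
    {S : set X} {x0 : X} {hx0 : S x0} (x : X) (e : R) :
  measurable (sub_val @^-1` [set y : X | `|x - y| <= e] : set (trace_space hx0)).
Proof. exact/measurable_trace_closed/closed_closed_ball_. Qed.

Section expansive_pushforward.
Variables (R : realType) (X Y : normedModType R).
Variables (S : set X) (S' : set Y) (x0 : X) (hx0 : S x0) (y0 : Y) (hy0 : S' y0).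
Variables (Phi : trace_space hx0 -> trace_space hy0) (kappa : R).
Hypothesis kappa_gt0 : 0 < kappa.
Hypothesis Phi_expansive : forall x x' : trace_space hx0,
  kappa * `|sub_val x - sub_val x'| <= `|sub_val (Phi x) - sub_val (Phi x')|.

Lemma expansive_preimage_closed_ball (y : Y) (e : R) (x1 : trace_space hx0) :
  `|y - sub_val (Phi x1)| <= e ->
  Phi @^-1` (sub_val @^-1` [set z | `|y - z| <= e])
    `<=` sub_val @^-1` [set z | `|sub_val x1 - z| <= 2 * e / kappa].
Proof.
move=> yx1e x /= yxe; rewrite ler_pdivlMr // mulrC.
apply: le_trans (Phi_expansive x1 x) _.
apply: le_trans (ler_distD y _ _) _.
by rewrite distrC; lra.
Qed.

Hypothesis mPhi : measurable_fun [set: trace_space hx0] Phi.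

Lemma growth_order_pushforward (mu : {measure set trace_space hx0 -> \bar R})
    (s0 : R) :
  has_growth_order mu s0 -> has_growth_order (pushforward mu Phi) s0.
Proof.
move=> mu_growth s /mu_growth [eps0 [c [eps0_gt0 [c_gt0 mu_ball]]]].
exists (eps0 * kappa / 2), (c * (2 / kappa) `^ (- s^-1)).
split; first by rewrite divr_gt0 // mulr_gt0.
split; first by rewrite mulr_gt0 // powR_gt0 // divr_gt0.
move=> y e e_gt0 e_lt; rewrite /pushforward.
set A := Phi @^-1` _.
have [->|/set0P [x1 Ax1]] := eqVneq A set0.
  by rewrite measure0 lee_fin powR_ge0.
have radius_gt0 : 0 < 2 * e / kappa by rewrite divr_gt0 // mulr_gt0.
have radius_lt : 2 * e / kappa < eps0.
  by rewrite ltr_pdivrMr //; rewrite ltr_pdivlMr // in e_lt; lra.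
have mA : measurable A.
  rewrite /A -[X in measurable X]setTI.
  exact: mPhi measurableT _ (measurable_trace_closed_ball y e).
have mball :=
  measurable_trace_closed_ball (hx0 := hx0) (sub_val x1) (2 * e / kappa).
apply: le_trans (le_measure mu (mem_set mA) (mem_set mball)
  (expansive_preimage_closed_ball _ _ _ Ax1)) _.
apply: le_trans (mu_ball _ _ radius_gt0 radius_lt) _.
have ratio_ge0 : 0 <= 2 / kappa by rewrite divr_ge0 // ltW.
by rewrite lee_fin (mulrAC 2 e) (powRM _ ratio_ge0 (ltW e_gt0)) mulrA.
Qed.

End expansive_pushforward.

Theorem lemmaA1 (R : realType) (X Y : completeNormedModType R)
  (S : set X) (S' : set Y) (x0 : X) (hx0 : S x0) (y0 : Y) (hy0 : S' y0)
  (Phi : trace_space hx0 -> trace_space hy0)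
  (mPhi : measurable_fun [set: trace_space hx0] Phi)
  (expansive : exists kappa : R, 0 < kappa /\
     forall x x' : trace_space hx0,
       kappa * `|sub_val x - sub_val x'| <= `|sub_val (Phi x) - sub_val (Phi x')|)
  (s0 : R) (hs0 : 0 <= s0)
  (P : probability (trace_space hx0) R)
  (hP : has_growth_order P s0) :
  exists Q : probability (trace_space hy0) R,
    (forall A : set (trace_space hy0), Q A = pushforward P Phi A) /\
    has_growth_order Q s0.
Proof.
have [kappa [kappa_gt0 Phi_expansive]] := expansive.
exists (distribution P (mfun_Sub (mem_set mPhi : Phi \in mfun))); split => //.
exact: growth_order_pushforward kappa_gt0 Phi_expansive mPhi _ _ hP.
Qed.
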